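(* Let $\alpha\in\mathbb{R}\setminus\{0\}$ and let $A=\{(x_1,y_1),\dots,(x_\ell,y_\ell)\}\subset\mathbb{R}_+^{m+n}$. Then: (a) $T_{\mathbb Q_\alpha,C}(A)$ and $T_{\mathbb Q_\alpha,V}(A)$ are closed; (b) $T_{\mathbb Q_\alpha,C}(A)$ and $T_{\mathbb Q_\alpha,V}(A)$ are $\mathbb Q_\alpha$-convex; (c) $T_{\mathbb Q_\alpha,C}(A)$ and $T_{\mathbb Q_\alpha,V}(A)$ satisfy free disposal, i.e. $T=(T+K)\cap\mathbb{R}_+^{m+n}$ for each of them; (d) $T_{\mathbb Q_\alpha,C}(A)$ is graph-translation homothetic: for all $(x,y)\in T_{\mathbb Q_\alpha,C}(A)$ and all $\delta\in\mathbb{R}$ with $(x+\delta1\!\!1_m,y+\delta1\!\!1_n)\ge0$, one has $(x+\delta1\!\!1_m,y+\delta1\!\!1_n)\in T_{\mathbb Q_\alpha,C}(A)$.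
   Context: $K=\mathbb{R}_+^m\times(-\mathbb{R}_+^n)$; $1\!\!1_m$ is the vector of ones; $\mathbf e$, $\mathbf{ln}$ are componentwise. $\mathbb M_\alpha=\mathbb{R}\cup\{-\infty\}$ if $\alpha>0$, $\mathbb M_\alpha=\mathbb{R}\cup\{+\infty\}$ if $\alpha<0$, with $e^{\alpha t}=0$ when $\alpha t=-\infty$ and $\ln0=-\infty$. The quantized technologies are $$T_{\mathbb Q_\alpha,C}(A)=\Big\{(x,y)\in\mathbb{R}_+^{m+n}: x\ge\tfrac1\alpha\mathbf{ln}\Big(\sum_{k}e^{\alpha t_k}\mathbf e^{\alpha x_k}\Big),\ y\le\tfrac1\alpha\mathbf{ln}\Big(\sum_k e^{\alpha t_k}\mathbf e^{\alpha y_k}\Big)\text{ for some }t\in\mathbb M_\alpha^\ell\Big\},$$ and $T_{\mathbb Q_\alpha,V}(A)$ is defined in the same way with the additional constraint $\frac1\alpha\ln\big(\sum_k e^{\alpha t_k}\big)=0$. A set $C\subset\mathbb M_\alpha^{d}$ is $\mathbb Q_\alpha$-convex if $\{\mathbf e^{\alpha z}:z\in C\}$ is convex. *)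

From HB Require Import structures.
From mathcomp Require Import all_boot all_order all_algebra.
From mathcomp Require Import all_classical all_reals all_analysis.
Set Implicit Arguments. Unset Strict Implicit. Unset Printing Implicit Defensive.
Import Order.TTheory GRing.Theory Num.Theory.
Import numFieldNormedType.Exports.
Local Open Scope classical_set_scope.
Local Open Scope ring_scope.

Section QDefs.
Variable R : realType.

Definition Malpha (alpha : R) : set (\bar R) :=
  if 0 < alpha then [set t | t != +oo%E] else [set t | t != -oo%E].

(* e^{alpha t}, with e^{alpha t} = 0 when alpha t = -oo (t in M_alpha) *)
Definition eexpa (alpha : R) (t : \bar R) : R :=
  match t with
  | EFin r => expR (alpha * r)
  | _ => 0
  end.

(* (1/alpha) ln s for s >= 0, with ln 0 = -oo *)
Definition qlog (alpha : R) (s : R) : \bar R :=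
  if s == 0 then (if 0 < alpha then -oo%E else +oo%E)
  else ((ln s) / alpha)%:E.

(* the quantized technologies T_{Q_alpha,C}(A) and T_{Q_alpha,V}(A), where
   A = {(X k, Y k) : k < l} *)
Definition TQC (alpha : R) (m n l : nat)
    (X : 'I_l -> 'rV[R]_m) (Y : 'I_l -> 'rV[R]_n) : set ('rV[R]_m * 'rV[R]_n) :=
  [set p : 'rV[R]_m * 'rV[R]_n | (forall i, 0 <= p.1 0 i) /\ (forall j, 0 <= p.2 0 j) /\
     exists t : 'I_l -> \bar R, (forall k, Malpha alpha (t k)) /\
       (forall i, (qlog alpha (\sum_(k < l) eexpa alpha (t k) * expR (alpha * X k 0 i))
                    <= (p.1 0 i)%:E)%E) /\
       (forall j, ((p.2 0 j)%:E <=
                    qlog alpha (\sum_(k < l) eexpa alpha (t k) * expR (alpha * Y k 0 j)))%E)].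

Definition TQV (alpha : R) (m n l : nat)
    (X : 'I_l -> 'rV[R]_m) (Y : 'I_l -> 'rV[R]_n) : set ('rV[R]_m * 'rV[R]_n) :=
  [set p : 'rV[R]_m * 'rV[R]_n | (forall i, 0 <= p.1 0 i) /\ (forall j, 0 <= p.2 0 j) /\
     exists t : 'I_l -> \bar R, (forall k, Malpha alpha (t k)) /\
       qlog alpha (\sum_(k < l) eexpa alpha (t k)) = 0%:E /\
       (forall i, (qlog alpha (\sum_(k < l) eexpa alpha (t k) * expR (alpha * X k 0 i))
                    <= (p.1 0 i)%:E)%E) /\
       (forall j, ((p.2 0 j)%:E <=
                    qlog alpha (\sum_(k < l) eexpa alpha (t k) * expR (alpha * Y k 0 j)))%E)].

Definition expa_map (alpha : R) (m n : nat) (p : 'rV[R]_m * 'rV[R]_n)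
  : 'rV[R]_m * 'rV[R]_n :=
  (map_mx (fun r => expR (alpha * r)) p.1, map_mx (fun r => expR (alpha * r)) p.2).

Definition Qconvex (alpha : R) (m n : nat) (C : set ('rV[R]_m * 'rV[R]_n)) : Prop :=
  forall u v, (@expa_map alpha m n @` C) u -> (@expa_map alpha m n @` C) v ->
  forall lam : R, 0 <= lam <= 1 ->
    (@expa_map alpha m n @` C) (lam *: u.1 + (1 - lam) *: v.1, lam *: u.2 + (1 - lam) *: v.2).

Definition nonneg_orthant (m n : nat) : set ('rV[R]_m * 'rV[R]_n) :=
  [set p : 'rV[R]_m * 'rV[R]_n | (forall i, 0 <= p.1 0 i) /\ (forall j, 0 <= p.2 0 j)].

Definition coneK (m n : nat) : set ('rV[R]_m * 'rV[R]_n) :=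
  [set p : 'rV[R]_m * 'rV[R]_n | (forall i, 0 <= p.1 0 i) /\ (forall j, p.2 0 j <= 0)].

Definition free_disposal (m n : nat) (T : set ('rV[R]_m * 'rV[R]_n)) : Prop :=
  T = [set p : 'rV[R]_m * 'rV[R]_n | exists q, exists k, T q /\ coneK k /\ p = (q.1 + k.1, q.2 + k.2)]
      `&` @nonneg_orthant m n.

Definition graph_translation_homothetic (m n : nat) (T : set ('rV[R]_m * 'rV[R]_n))
  : Prop :=
  forall x y, T (x, y) -> forall delta : R,
    @nonneg_orthant m n (x + const_mx delta, y + const_mx delta) ->
    T (x + const_mx delta, y + const_mx delta).

End QDefs.

(* Write E = e^{alpha z} componentwise and u_k = e^{alpha t_k}; as t ranges over
   M_alpha^l, u ranges over the nonnegative orthant (u_k = 0 for t_k = -/+oo).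
   Then (x, y) lies in T_{Q_alpha,C}(A) iff x, y >= 0 and some u >= 0 satisfies
     alpha * sum_k u_k e^{alpha X_k} <= alpha * e^{alpha x},
     alpha * e^{alpha y} <= alpha * sum_k u_k e^{alpha Y_k},
   plus sum_k u_k = 1 for T_{Q_alpha,V}(A).  So each technology is the nonnegative
   orthant intersected with the preimage, under the continuous map e^{alpha .}, of
   the set P of points E admitting such weights: the classical DEA technology of
   the exponentiated data, with all inequalities reversed when alpha < 0.  P is
   convex and monotone, and a cone in the C case; since e^{alpha (z + delta)} =
   e^{alpha delta} e^{alpha z}, these give Q_alpha-convexity, free disposal and
   graph-translation homotheticity.  P is the projection of a closed set of pairs
   (E, u), hence closed as soon as weights can be chosen locally bounded in E:
   either one row bounds every u_k from above (sum_k u_k = 1, an x-row if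
   alpha > 0, a y-row if alpha < 0), or every row is a lower bound on the weights
   and a large constant weight vector works. *)

From mathcomp Require Import all_boot all_order all_algebra.
From mathcomp Require Import all_classical all_reals all_analysis.
From mathcomp Require Import ring lra.
Set Implicit Arguments. Unset Strict Implicit. Unset Printing Implicit Defensive.
Import Order.TTheory GRing.Theory Num.Theory.
Import numFieldNormedType.Exports.
Local Open Scope classical_set_scope.
Local Open Scope ring_scope.

Section QuantizedExp.
Variables (R : realType) (a : R).
Hypothesis a_neq0 : a != 0.

Lemma aexpR_mono : {mono (fun x : R => a * expR (a * x)) : x y / x <= y}.
Proof.
move=> x y /=; case/orP: (lt_total a_neq0) => [an|ap].
- by rewrite ler_nM2l // ler_expR ler_nM2l.
- by rewrite ler_pM2l // ler_expR ler_pM2l.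
Qed.

Lemma expR_lnV r : 0 < r -> expR (a * (ln r / a)) = r.
Proof. by move=> r0; rewrite mulrCA divff // mulr1 lnK. Qed.

Lemma ge0_lnV r : 0 < r -> (0 <= ln r / a) = (a <= a * r).
Proof. by move=> r0; rewrite -(aexpR_mono 0) mulr0 expR0 mulr1 expR_lnV. Qed.

Lemma qlog_le s x : 0 <= s -> (qlog a s <= x%:E)%E = (a * s <= a * expR (a * x)).
Proof.
rewrite le_eqVlt => /predU1P[<-|s0]; last first.
  by rewrite /qlog gt_eqF // lee_fin -[in RHS](expR_lnV s0) aexpR_mono.
have ea := expR_gt0 (a * x); rewrite /qlog eqxx mulr0.
case/orP: (lt_total a_neq0) => [an|ap].
- by rewrite (lt_gtF an) leye_eq; apply/esym/negbTE; rewrite -ltNge nmulr_rlt0.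
- by rewrite ap leNye; apply/esym/ltW/mulr_gt0.
Qed.

Lemma le_qlog s x : 0 <= s -> (x%:E <= qlog a s)%E = (a * expR (a * x) <= a * s).
Proof.
rewrite le_eqVlt => /predU1P[<-|s0]; last first.
  by rewrite /qlog gt_eqF // lee_fin -[in RHS](expR_lnV s0) aexpR_mono.
have ea := expR_gt0 (a * x); rewrite /qlog eqxx mulr0.
case/orP: (lt_total a_neq0) => [an|ap].
- by rewrite (lt_gtF an) leey; apply/esym/ltW; rewrite nmulr_rlt0.
- by rewrite ap leeNy_eq; apply/esym/negbTE; rewrite -ltNge pmulr_rgt0.
Qed.

Lemma qlog_eq0 s : 0 <= s -> qlog a s = 0%:E <-> s = 1.
Proof.
rewrite le_eqVlt => /predU1P[<-|s0].
  by rewrite /qlog eqxx; split=> [|/eqP]; [case: ifP | rewrite eq_sym oner_eq0].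
rewrite /qlog gt_eqF //; split=> [[/eqP]|->]; last by rewrite ln1 mul0r.
rewrite mulf_eq0 invr_eq0 (negbTE a_neq0) orbF => /eqP ln0.
by rewrite -(lnK s0) ln0 expR0.
Qed.

Lemma eexpa_ge0 t : 0 <= eexpa a t.
Proof. by case: t => //= r; exact: expR_ge0. Qed.

Lemma eexpa_qlog r : 0 <= r -> eexpa a (qlog a r) = r.
Proof.
rewrite le_eqVlt => /predU1P[<-|r0]; first by rewrite /qlog eqxx; case: ifP.
by rewrite /qlog gt_eqF //= expR_lnV.
Qed.

Lemma Malpha_qlog r : Malpha a (qlog a r).
Proof. by rewrite /Malpha /qlog; case: ifP => ap; case: ifP => //=; rewrite ap. Qed.

End QuantizedExp.

Section ExpTechnology.
Variables (R : realType) (a : R) (m n l : nat).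
Variables (X : 'I_l -> 'rV[R]_m) (Y : 'I_l -> 'rV[R]_n).

Definition dea_rows (E : 'rV[R]_m * 'rV[R]_n) (u : 'rV[R]_l) : Prop :=
  (forall i, a * \sum_k u 0 k * expR (a * X k 0 i) <= a * E.1 0 i) /\
  (forall j, a * E.2 0 j <= a * \sum_k u 0 k * expR (a * Y k 0 j)).

Definition dea_witness (V : bool) (E : 'rV[R]_m * 'rV[R]_n) (u : 'rV[R]_l) : Prop :=
  (forall k, 0 <= u 0 k) /\ (V -> \sum_k u 0 k = 1) /\ dea_rows E u.

Definition dea_tech (V : bool) : set ('rV[R]_m * 'rV[R]_n) :=
  [set E | exists u, dea_witness V E u].

Hypothesis a_neq0 : a != 0.

Lemma qlog_rowsE (t : 'I_l -> \bar R) (u : 'rV[R]_l) (p : 'rV[R]_m * 'rV[R]_n) :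
  (forall k, u 0 k = eexpa a (t k)) ->
  (forall i, (qlog a (\sum_k eexpa a (t k) * expR (a * X k 0 i)) <= (p.1 0 i)%:E)%E) /\
  (forall j, ((p.2 0 j)%:E <= qlog a (\sum_k eexpa a (t k) * expR (a * Y k 0 j)))%E)
  <-> dea_rows (expa_map a p) u.
Proof.
move=> tu; have uE c : \sum_k eexpa a (t k) * expR (c k) = \sum_k u 0 k * expR (c k).
  by apply: eq_bigr => k _; rewrite tu.
have S0 c : 0 <= \sum_k eexpa a (t k) * expR (c k).
  by apply: sumr_ge0 => k _; rewrite mulr_ge0 ?eexpa_ge0 ?expR_ge0.
rewrite /dea_rows /= /expa_map /=.
split=> -[hx hy]; split=> [i|j].
- by rewrite mxE -(uE (fun k => a * X k 0 i)) -qlog_le.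
- by rewrite mxE -(uE (fun k => a * Y k 0 j)) -le_qlog.
- by rewrite qlog_le // uE; move: (hx i); rewrite mxE.
- by rewrite le_qlog // uE; move: (hy j); rewrite mxE.
Qed.

Lemma TQC_deaE :
  TQC a X Y = @nonneg_orthant R m n `&` @expa_map R a m n @^-1` dea_tech false.
Proof.
apply/seteqP; split=> p /=.
- case=> hx [hy [t [_ rows]]]; split=> //.
  exists (\row_k eexpa a (t k)); split=> [k|]; first by rewrite mxE eexpa_ge0.
  by split=> //; apply/(qlog_rowsE (t:=t)) => // k; rewrite mxE.
- case=> -[hx hy] [u [u0 [_ rows]]]; split=> //; split=> //.
  exists (fun k => qlog a (u 0 k)); split=> [k|]; first exact: Malpha_qlog.
  by apply/(qlog_rowsE (u:=u)) => // k; rewrite eexpa_qlog.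
Qed.

Lemma TQV_deaE :
  TQV a X Y = @nonneg_orthant R m n `&` @expa_map R a m n @^-1` dea_tech true.
Proof.
have sumE (t : 'I_l -> \bar R) (u : 'rV[R]_l) : (forall k, u 0 k = eexpa a (t k)) ->
    qlog a (\sum_k eexpa a (t k)) = 0%:E <-> \sum_k u 0 k = 1.
  move=> tu; rewrite qlog_eq0 ?sumr_ge0 // => [|k _]; last exact: eexpa_ge0.
  by under eq_bigr do rewrite -tu.
apply/seteqP; split=> p /=.
- case=> hx [hy [t [_ [sum1 rows]]]]; split=> //.
  have tu k : (\row_k eexpa a (t k)) 0 k = eexpa a (t k) by rewrite mxE.
  exists (\row_k eexpa a (t k)); split=> [k|]; first by rewrite mxE eexpa_ge0.
  by split=> [_|]; [exact/(sumE _ _ tu) | exact/(qlog_rowsE (t:=t))].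
- case=> -[hx hy] [u [u0 [/(_ erefl) sum1 rows]]]; split=> //; split=> //.
  have tu k : u 0 k = eexpa a (qlog a (u 0 k)) by rewrite eexpa_qlog.
  exists (fun k => qlog a (u 0 k)); split=> [k|]; first exact: Malpha_qlog.
  by split; [exact/(sumE _ _ tu) | exact/(qlog_rowsE (u:=u))].
Qed.

End ExpTechnology.

Lemma closed_projection (T U : topologicalType) (S : set (T * U)) :
  closed S ->
  (forall p : T, exists2 K : set U, compact K &
     \forall q \near p, (exists u, S (q, u)) -> exists2 u, K u & S (q, u)) ->
  closed [set q | exists u, S (q, u)].
Proof.
move=> Scl Sbnd p clSp; have [K cK Kp] := Sbnd p.
pose G B := [set u | K u /\ exists2 q, B q & S (q, u)].
pose F := filter_from (nbhs p) G.
have FF : ProperFilter F.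
  apply: filter_from_proper; last first.
    move=> B /(filterI Kp)/clSp[q [[u Squ] [Kq Bq]]].
    by have [v Kv Sqv] := Kq (ex_intro _ u Squ); exists v; split=> //; exists q.
  apply: filter_from_filter; first by exists setT; exact: filterT.
  move=> B C pB pC; exists (B `&` C); first exact: filterI.
  by move=> u [Ku [q [Bq Cq] Squ]]; split; split=> //; exists q.
have [u [Ku clFu]] : K `&` cluster F !=set0.
  by apply: cK; exists setT; [exact: filterT | move=> u []].
exists u; apply: Scl => A [[B W] /= [pB uW] BWA].
have FGB : F (G B) by exists B.
have [v [[_ [q Bq Sqv]] Wv]] := clFu _ _ FGB uW.
by exists (q, v); split=> //; exact: BWA.
Qed.

Section RealTopology.
Variable R : realType.

Lemma closed_forall_le (T : topologicalType) (J : Type) (f g : J -> T -> R) :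
  (forall i, continuous (f i)) -> (forall i, continuous (g i)) ->
  closed [set x | forall i, f i x <= g i x].
Proof.
move=> fc gc.
have -> : [set x | forall i, f i x <= g i x] =
    \bigcap_(i in setT) ((g i \- f i) @^-1` [set r | 0 <= r]).
  apply/seteqP; split=> x /= le_fg i; first by rewrite /= subr_ge0.
  by have := le_fg i I; rewrite /= subr_ge0.
apply: closed_bigI => i _; apply: preimage_closed; last exact: closed_ge.
by move=> x _; exact: (continuousB (gc i x) (fc i x)).
Qed.

Lemma map_mx_continuous k k' (f : R -> R) :
  continuous f -> continuous (map_mx f : 'M[R]_(k, k') -> 'M[R]_(k, k')).
Proof.
move=> fc M A /= [B MB BA].
exists (fun i j => f @^-1` B i j) => [i j|N fNB].
  by apply: fc; move: (MB i j); rewrite mxE.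
by apply: BA => i j; rewrite mxE; exact: fNB.
Qed.

Lemma sum_continuous (T : topologicalType) (J : Type) (r : seq J) (f : J -> T -> R) :
  (forall i, continuous (f i)) -> continuous (fun x => \sum_(i <- r) f i x).
Proof.
by move=> fc; apply: continuous_big => [|i _]; [exact: add_continuous | exact: fc].
Qed.

Lemma fst_coord_continuous (U : topologicalType) k (i : 'I_k) :
  continuous (fun p : 'rV[R]_k * U => p.1 0 i).
Proof.
move=> p; apply: (@continuous_comp _ _ _ fst (fun M : 'rV[R]_k => M 0 i)).
  exact: cvg_fst.
exact: coord_continuous.
Qed.

Lemma snd_coord_continuous (T : topologicalType) k (i : 'I_k) :
  continuous (fun p : T * 'rV[R]_k => p.2 0 i).
Proof.
move=> p; apply: (@continuous_comp _ _ _ snd (fun M : 'rV[R]_k => M 0 i)).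
  exact: cvg_snd.
exact: coord_continuous.
Qed.

End RealTopology.

Section OrthantPreimage.
Variables (R : realType) (a : R) (m n : nat) (P : set ('rV[R]_m * 'rV[R]_n)).

Local Notation Tq := (@nonneg_orthant R m n `&` @expa_map R a m n @^-1` P).

Lemma closed_nonneg_orthant : closed (@nonneg_orthant R m n).
Proof.
apply: closedI.
  exact (closed_forall_le (fun=> @cst_continuous _ R 0) (@fst_coord_continuous R _ _)).
exact (closed_forall_le (fun=> @cst_continuous _ R 0) (@snd_coord_continuous R _ _)).
Qed.

Lemma expa_map_continuous : continuous (@expa_map R a m n).
Proof.
have ec : continuous (fun r : R => expR (a * r)).
  move=> r.
  exact: (continuous_comp (@mulrl_continuous _ a r) (@continuous_expR _ _)).
move=> p; exact (cvg_pair
  (@continuous_comp _ _ _ fst (map_mx _) p cvg_fst (map_mx_continuous ec (x:=p.1)))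
  (@continuous_comp _ _ _ snd (map_mx _) p cvg_snd (map_mx_continuous ec (x:=p.2)))).
Qed.

Lemma closed_orthant_preimage : closed P -> closed Tq.
Proof.
move=> Pcl; apply: closedI; first exact: closed_nonneg_orthant.
by apply: preimage_closed Pcl => p _; exact: expa_map_continuous.
Qed.

Lemma gth_orthant_preimage :
  (forall c (E : 'rV[R]_m * 'rV[R]_n), 0 < c -> P E -> P (c *: E.1, c *: E.2)) ->
  graph_translation_homothetic Tq.
Proof.
move=> Pcone x y [_ Pxy] d orth; split=> //=.
have -> : expa_map a (x + const_mx d, y + const_mx d) =
    (expR (a * d) *: (expa_map a (x, y)).1, expR (a * d) *: (expa_map a (x, y)).2).
  by congr pair; apply/matrixP => i j; rewrite !mxE mulrDr expRD mulrC.
exact: Pcone (expR_gt0 _) Pxy.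
Qed.

Hypothesis a_neq0 : a != 0.

Lemma free_disposal_orthant_preimage :
  (forall E E' : 'rV[R]_m * 'rV[R]_n, P E -> (forall i, a * E.1 0 i <= a * E'.1 0 i) ->
     (forall j, a * E'.2 0 j <= a * E.2 0 j) -> P E') ->
  free_disposal Tq.
Proof.
move=> Pmono; apply/seteqP; split=> [p Tp|p].
  split; last exact: Tp.1.
  exists p, (0, 0); split=> //; split; first by split=> i; rewrite mxE.
  by rewrite /= !addr0 -surjective_pairing.
case=> -[q [k [[_ Pq] [[k1 k2] ->]]]] orth; split=> //=.
by apply: (Pmono _ _ Pq) => [i|j]; rewrite !mxE aexpR_mono ?lerDl ?gerDl.
Qed.

Lemma expa_row_convex k (x y : 'rV[R]_k) (lam : R) : 0 <= lam <= 1 ->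
  (forall i, 0 <= x 0 i) -> (forall i, 0 <= y 0 i) ->
  exists2 z : 'rV[R]_k, (forall i, 0 <= z 0 i) &
    map_mx (fun r => expR (a * r)) z =
    lam *: map_mx (fun r => expR (a * r)) x +
    (1 - lam) *: map_mx (fun r => expR (a * r)) y.
Proof.
case/andP=> lam0 lam1 x0 y0.
pose c i := lam * expR (a * x 0 i) + (1 - lam) * expR (a * y 0 i).
have c_gt0 i : 0 < c i.
  by have := expR_gt0 (a * x 0 i); have := expR_gt0 (a * y 0 i); rewrite /c; nra.
have a_le_ac i : a <= a * c i.
  have := x0 i; have := y0 i; rewrite -!(aexpR_mono a_neq0 0) mulr0 expR0 mulr1 /c.
  by nra.
exists (\row_i (ln (c i) / a)) => [i|]; first by rewrite mxE ge0_lnV.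
by apply/matrixP => i j; rewrite !mxE (ord1 i) expR_lnV.
Qed.

Lemma Qconvex_orthant_preimage :
  (forall (E E' : 'rV[R]_m * 'rV[R]_n) lam, P E -> P E' -> 0 <= lam <= 1 ->
     P (lam *: E.1 + (1 - lam) *: E'.1, lam *: E.2 + (1 - lam) *: E'.2)) ->
  Qconvex a Tq.
Proof.
move=> Pconv _ _ [p [[p1 p2] Pp] <-] [q [[q1 q2] Pq] <-] lam lam01.
have [z1 z1_ge0 ez1] := expa_row_convex lam01 p1 q1.
have [z2 z2_ge0 ez2] := expa_row_convex lam01 p2 q2.
exists (z1, z2); last by rewrite /expa_map /= ez1 ez2.
by split=> //; rewrite /expa_map /= ez1 ez2; exact: (Pconv _ _ _ Pp Pq lam01).
Qed.

End OrthantPreimage.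

Section Weights.
Variables (R : realType) (l : nat).

Lemma ler_term_sum (I : finType) (F : I -> R) i :
  (forall j, 0 <= F j) -> F i <= \sum_j F j.
Proof. by move=> F0; rewrite (bigD1 i) //= lerDl sumr_ge0. Qed.

Lemma near_le_normD1 (T : topologicalType) (p : T) (b : T -> R) :
  {for p, continuous b} -> \forall q \near p, b q <= `|b p| + 1.
Proof.
move=> bc; apply: filterS (cvgr_dist_lt _ _ bc _ ltr01) => q.
rewrite ltr_norml => /andP[+ _]; have := ler_norm (b p); lra.
Qed.

Lemma near_weights_bounded (T : topologicalType) (p : T) (b : T -> R)
    (c : 'I_l -> R) :
  {for p, continuous b} -> (forall k, 0 < c k) ->
  exists M, \forall q \near p, forall u : 'rV[R]_l, (forall k, 0 <= u 0 k) ->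
    \sum_k u 0 k * c k <= b q -> forall k, u 0 k <= M.
Proof.
move=> /near_le_normD1 near_b c_gt0.
exists (\big[Num.max/0]_k ((`|b p| + 1) / c k)).
apply: filterS near_b => q bq u u0 sum_le k; apply: (bigmax_sup k) => //.
rewrite ler_pdivlMr // (le_trans _ bq) // (le_trans _ sum_le) //.
by apply: ler_term_sum => j; rewrite mulr_ge0 // ltW.
Qed.

Lemma near_const_weights (T : topologicalType) (p : T) (J : finType)
    (b : J -> T -> R) (c : J -> 'I_l -> R) (k0 : 'I_l) :
  (forall j, {for p, continuous (b j)}) -> (forall j k, 0 < c j k) ->
  exists2 w, 0 <= w & \forall q \near p, forall j, b j q <= \sum_k w * c j k.
Proof.
move=> bc c_gt0; pose w := \big[Num.max/0]_j ((`|b j p| + 1) / c j k0).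
exists w; first exact: bigmax_ge_id.
apply: filterS (filter_forall _ (fun j => near_le_normD1 (bc j))) => q bq j.
apply: le_trans (bq j) (le_trans _ (ler_term_sum k0 _)) => [|k].
  by rewrite -ler_pdivrMr //; apply: (bigmax_sup j).
by rewrite mulr_ge0 ?bigmax_ge_id ?ltW.
Qed.

End Weights.

Section DeaTech.
Variables (R : realType) (a : R) (m n l : nat).
Variables (X : 'I_l -> 'rV[R]_m) (Y : 'I_l -> 'rV[R]_n).

Local Notation dea_witness := (dea_witness a X Y).
Local Notation dea_tech := (dea_tech a X Y).

Lemma sum_scale_weights (u : 'rV[R]_l) (s : R) (c : 'I_l -> R) :
  \sum_k (s *: u) 0 k * c k = s * \sum_k u 0 k * c k.
Proof. by rewrite mulr_sumr; apply: eq_bigr => k _; rewrite mxE mulrA. Qed.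

Lemma dea_tech_convex V (E E' : 'rV[R]_m * 'rV[R]_n) lam :
  dea_tech V E -> dea_tech V E' -> 0 <= lam <= 1 ->
  dea_tech V (lam *: E.1 + (1 - lam) *: E'.1, lam *: E.2 + (1 - lam) *: E'.2).
Proof.
move=> [u [u0 [u1 [ux uy]]]] [u' [u'0 [u'1 [u'x u'y]]]] /andP[lam0 lam1].
have sumD c : \sum_k (lam *: u + (1 - lam) *: u') 0 k * c k =
    lam * \sum_k u 0 k * c k + (1 - lam) * \sum_k u' 0 k * c k.
  by rewrite -!sum_scale_weights -big_split; apply: eq_bigr => k _; rewrite !mxE mulrDl.
exists (lam *: u + (1 - lam) *: u'); split; last split.
- by move=> k; rewrite !mxE; apply: addr_ge0; apply: mulr_ge0; rewrite ?subr_ge0.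
- move=> /[dup] /u1 s1 /u'1 s'1; under eq_bigr do rewrite !mxE.
  by rewrite big_split /= -!mulr_sumr s1 s'1; ring.
- split=> [i|j]; rewrite sumD !mxE.
  + by have := ux i; have := u'x i; nra.
  + by have := uy j; have := u'y j; nra.
Qed.

Lemma dea_tech_mono V (E E' : 'rV[R]_m * 'rV[R]_n) :
  dea_tech V E -> (forall i, a * E.1 0 i <= a * E'.1 0 i) ->
  (forall j, a * E'.2 0 j <= a * E.2 0 j) -> dea_tech V E'.
Proof.
move=> [u [u0 [u1 [ux uy]]]] EE'x EE'y; exists u; do 2!split=> //.
by split=> [i|j]; [exact: le_trans (ux i) (EE'x i) | exact: le_trans (EE'y j) (uy j)].
Qed.

Lemma dea_tech_scale c (E : 'rV[R]_m * 'rV[R]_n) :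
  0 < c -> dea_tech false E -> dea_tech false (c *: E.1, c *: E.2).
Proof.
move=> c_gt0 [u [u0 [_ [ux uy]]]]; exists (c *: u); split; last split=> //.
  by move=> k; rewrite mxE mulr_ge0 // ltW.
by split=> [i|j]; rewrite sum_scale_weights mxE mulrCA [a * (c * _)]mulrCA ler_pM2l.
Qed.

Lemma closed_dea_witness V :
  closed [set Eu : ('rV[R]_m * 'rV[R]_n) * 'rV[R]_l | dea_witness V Eu.1 Eu.2].
Proof.
pose T := (('rV[R]_m * 'rV[R]_n) * 'rV[R]_l)%type.
have cu k : continuous (fun Eu : T => Eu.2 0 k) := @snd_coord_continuous R _ _ k.
have ca (f : T -> R) : continuous f -> continuous (fun Eu => a * f Eu).
  by move=> fc Eu; exact: (continuous_comp (fc Eu) (@mulrl_continuous _ a _)).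
have csum (c : 'I_l -> R) : continuous (fun Eu : T => a * \sum_k Eu.2 0 k * c k).
  apply: ca; apply: sum_continuous => k Eu.
  exact: (continuous_comp (cu k Eu) (@mulrr_continuous _ (c k) _)).
have cE1 i : continuous (fun Eu : T => a * Eu.1.1 0 i).
  apply: ca => Eu.
  exact: (continuous_comp (@cvg_fst _ _ _ _ _) (@fst_coord_continuous R _ _ i Eu.1)).
have cE2 j : continuous (fun Eu : T => a * Eu.1.2 0 j).
  apply: ca => Eu.
  exact: (continuous_comp (@cvg_fst _ _ _ _ _) (@snd_coord_continuous R _ _ j Eu.1)).
apply: closedI; first exact: (closed_forall_le (fun _ => @cst_continuous _ R 0) cu).
apply: closedI; last first.
  apply: closedI; first exact: (closed_forall_le (fun i => csum _) cE1).
  exact: (closed_forall_le cE2 (fun j => csum _)).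
case: V => [|Eu _ //]; pose sum_u (Eu : T) := \sum_k Eu.2 0 k.
have cl1 : closed (sum_u @^-1` [set 1]).
  apply: preimage_closed; last exact: closed_eq.
  by move=> Eu _; exact: sum_continuous.
move=> Eu /(closureS (B := sum_u @^-1` [set 1])) clEu _.
by apply/cl1/clEu => x /(_ erefl).
Qed.

Lemma dea_witness_bounded_by_row V (E : 'rV[R]_m * 'rV[R]_n)
    (b : 'rV[R]_m * 'rV[R]_n -> R) (c : 'I_l -> R) :
  {for E, continuous b} -> (forall k, 0 < c k) ->
  (forall E' (u : 'rV[R]_l), dea_witness V E' u -> \sum_k u 0 k * c k <= b E') ->
  exists M : R, \forall E' \near E, (exists u, dea_witness V E' u) ->
    exists2 u : 'rV[R]_l, (forall k, 0 <= u 0 k <= M) & dea_witness V E' u.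
Proof.
move=> bc c_gt0 row_le; have [M nearM] := near_weights_bounded bc c_gt0.
exists M; apply: filterS nearM => E' bnd [u wu]; exists u => // k.
by case: (wu) => u0 _; rewrite u0 (bnd u u0 (row_le _ _ wu)).
Qed.

Lemma dea_witness_bounded_by_const V (E : 'rV[R]_m * 'rV[R]_n) (J : finType)
    (b : J -> 'rV[R]_m * 'rV[R]_n -> R) (c : J -> 'I_l -> R) :
  (forall j, {for E, continuous (b j)}) -> (forall j k, 0 < c j k) ->
  (forall E' w, 0 <= w -> (forall j, b j E' <= \sum_k w * c j k) ->
     dea_witness V E' (const_mx w)) ->
  exists M : R, \forall E' \near E, (exists u, dea_witness V E' u) ->
    exists2 u : 'rV[R]_l, (forall k, 0 <= u 0 k <= M) & dea_witness V E' u.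
Proof.
move=> bc c_gt0 const_wit.
case: (pickP (fun _ : 'I_l => true)) => [k0 _|l0]; last first.
  by exists 0; apply: filterE => E' [u wu]; exists u => // k; have := l0 k.
have [w w0 nearw] := near_const_weights k0 bc c_gt0.
exists w; apply: filterS nearw => E' wE' _; exists (const_mx w) => [k|].
  by rewrite mxE w0 lexx.
exact: const_wit.
Qed.

Hypothesis a_neq0 : a != 0.

Lemma dea_witness_locally_bounded V (E : 'rV[R]_m * 'rV[R]_n) :
  exists M : R, \forall E' \near E, (exists u, dea_witness V E' u) ->
    exists2 u : 'rV[R]_l, (forall k, 0 <= u 0 k <= M) & dea_witness V E' u.
Proof.
have const_sum w (c : 'I_l -> R) :
    \sum_k (const_mx w : 'rV[R]_l) 0 k * c k = \sum_k w * c k.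
  by apply: eq_bigr => k _; rewrite mxE.
case: V.
  apply: (@dea_witness_bounded_by_row _ _ (fun _ => 1) (fun _ => 1)) => //.
    exact: cst_continuous.
  by move=> E' u [_ [/(_ erefl) s1 _]]; under eq_bigr do rewrite /= mulr1; rewrite s1.
case/orP: (lt_total a_neq0) => [an|ap].
- case: (pickP (fun _ : 'I_n => true)) => [j0 _|n0].
    apply: (dea_witness_bounded_by_row (b := fun E' => E'.2 0 j0)
      (c := fun k => expR (a * Y k 0 j0))) => [|k|E' u [_ [_ [_ uy]]]].
    + exact: snd_coord_continuous.
    + exact: expR_gt0.
    + by rewrite -(ler_nM2l an).
  apply: (dea_witness_bounded_by_const (b := fun i E' => E'.1 0 i)
    (c := fun i k => expR (a * X k 0 i))) => [i|i k|E' w w0 wE'].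
  + exact: fst_coord_continuous.
  + exact: expR_gt0.
  + split=> [k|]; first by rewrite mxE.
    by split=> //; split=> [i|j]; [rewrite const_sum ler_nM2l | have := n0 j].
- case: (pickP (fun _ : 'I_m => true)) => [i0 _|m0].
    apply: (dea_witness_bounded_by_row (b := fun E' => E'.1 0 i0)
      (c := fun k => expR (a * X k 0 i0))) => [|k|E' u [_ [_ [ux _]]]].
    + exact: fst_coord_continuous.
    + exact: expR_gt0.
    + by rewrite -(ler_pM2l ap).
  apply: (dea_witness_bounded_by_const (b := fun j E' => E'.2 0 j)
    (c := fun j k => expR (a * Y k 0 j))) => [j|j k|E' w w0 wE'].
  + exact: snd_coord_continuous.
  + exact: expR_gt0.
  + split=> [k|]; first by rewrite mxE.
    by split=> //; split=> [i|j]; [have := m0 i | rewrite const_sum ler_pM2l].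
Qed.

Lemma closed_dea_tech V : closed (dea_tech V).
Proof.
have := closed_projection (@closed_dea_witness V); apply => E.
have [M nearM] := dea_witness_locally_bounded V E.
exists [set u : 'rV[R]_l | forall k, `[0, M]%classic (u 0 k)].
  exact: (rV_compact (fun k => @segment_compact R 0 M)).
by apply: filterS nearM => E' bnd /bnd[u u_box wu]; exists u.
Qed.

End DeaTech.

Theorem mainTheorem3 (R : realType) (alpha : R) (m n l : nat)
    (X : 'I_l -> 'rV[R]_m) (Y : 'I_l -> 'rV[R]_n)
    (halpha : alpha != 0)
    (hX : forall k i, 0 <= X k 0 i) (hY : forall k j, 0 <= Y k 0 j) :
  [/\ closed (TQC alpha X Y) /\ closed (TQV alpha X Y),
      Qconvex alpha (TQC alpha X Y) /\ Qconvex alpha (TQV alpha X Y),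
      free_disposal (TQC alpha X Y) /\ free_disposal (TQV alpha X Y)
    & graph_translation_homothetic (TQC alpha X Y)].
Proof.
rewrite TQC_deaE // TQV_deaE //; split.
- by split; apply: closed_orthant_preimage; exact: closed_dea_tech.
- by split; apply: Qconvex_orthant_preimage => // E E' lam; exact: dea_tech_convex.
- by split; apply: free_disposal_orthant_preimage => // E E'; exact: dea_tech_mono.
- by apply: gth_orthant_preimage => c E; exact: dea_tech_scale.
Qed.
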